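(* Let $\mathcal{A}=\mathcal{R}*_K\mathcal{S}*_L\mathcal{T}\in\mathbb{C}^{I_1\times\cdots\times I_N\times J_1\times\cdots\times J_M}$, where $\mathcal{R}\in\mathbb{C}^{I_1\times\cdots\times I_N\times H_1\times\cdots\times H_K}$, $\mathcal{S}\in\mathbb{C}^{H_1\times\cdots\times H_K\times G_1\times\cdots\times G_L}$ and $\mathcal{T}\in\mathbb{C}^{G_1\times\cdots\times G_L\times J_1\times\cdots\times J_M}$, and write $\mathcal{Z}=\mathcal{T}^{\dagger}*_L\mathcal{S}^{\dagger}*_K\mathcal{R}^{\dagger}$. Then $\mathcal{A}^{\dagger}=\mathcal{Z}$ if and only if all of the following hold: (i) $\mathcal{R}^{\dagger}*_N\mathcal{A}*_M\mathcal{Z}*_N\mathcal{A}*_M\mathcal{T}^{\dagger}=\mathcal{R}^{\dagger}*_N\mathcal{A}*_M\mathcal{T}^{\dagger}$; (ii) $\mathcal{T}*_M\mathcal{Z}*_N\mathcal{A}*_M\mathcal{Z}*_N\mathcal{R}=\mathcal{T}*_M\mathcal{Z}*_N\mathcal{R}$; (iii) $[\mathcal{R}^H*_N\mathcal{A}*_M\mathcal{Z}*_N\mathcal{R}]^H=\mathcal{R}^H*_N\mathcal{A}*_M\mathcal{Z}*_N\mathcal{R}$; (iv) $[\mathcal{T}*_M\mathcal{Z}*_N\mathcal{A}*_M\mathcal{T}^H]^H=\mathcal{T}*_M\mathcal{Z}*_N\mathcal{A}*_M\mathcal{T}^H$.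
   Context: $\mathbb{C}^{I_1\times\cdots\times I_N}$ denotes the set of complex tensors of order $N$ and dimension $I_1\times\cdots\times I_N$. For $\mathcal{A}\in\mathbb{C}^{I_1\times\cdots\times I_N\times K_1\times\cdots\times K_N}$ and $\mathcal{B}\in\mathbb{C}^{K_1\times\cdots\times K_N\times J_1\times\cdots\times J_M}$, the Einstein product $\mathcal{A}*_N\mathcal{B}$ is defined by $(\mathcal{A}*_N\mathcal{B})_{i_1\dots i_N j_1\dots j_M}=\sum_{k_1,\dots,k_N}a_{i_1\dots i_N k_1\dots k_N}b_{k_1\dots k_N j_1\dots j_M}$; it is associative. For $\mathcal{A}\in\mathbb{C}^{I_1\times\cdots\times I_N\times J_1\times\cdots\times J_M}$, $\mathcal{A}^H\in\mathbb{C}^{J_1\times\cdots\times J_M\times I_1\times\cdots\times I_N}$ has entries $(\mathcal{A}^H)_{j_1\dots j_M i_1\dots i_N}=\overline{a_{i_1\dots i_N j_1\dots j_M}}$, and the Moore–Penrose inverse $\mathcal{A}^{\dagger}$ is the unique $\mathcal{X}\in\mathbb{C}^{J_1\times\cdots\times J_M\times I_1\times\cdots\times I_N}$ with $\mathcal{A}*_M\mathcal{X}*_N\mathcal{A}=\mathcal{A}$, $\mathcal{X}*_N\mathcal{A}*_M\mathcal{X}=\mathcal{X}$, $(\mathcal{A}*_M\mathcal{X})^H=\mathcal{A}*_M\mathcal{X}$, $(\mathcal{X}*_N\mathcal{A})^H=\mathcal{X}*_N\mathcal{A}$. *)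

From HB Require Import structures.
From mathcomp Require Import all_boot all_order all_algebra.
From mathcomp Require Import complex.
From mathcomp Require Import reals.
From Stdlib Require Import ClassicalEpsilon.
Set Implicit Arguments. Unset Strict Implicit. Unset Printing Implicit Defensive.
Import Order.TTheory GRing.Theory Num.Theory.
Local Open Scope ring_scope.

(* Multi-indices (i_1,...,i_n) with i_k < d k : the index set of
   I_1 x ... x I_n when d k = I_(k+1). *)
Definition idx (n : nat) (d : 'I_n -> nat) : finType :=
  {dffun forall k : 'I_n, 'I_(d k)}.

(* A tensor in C^{I_1 x..x I_N x J_1 x..x J_M}, indexed by pairs
   (i, j) of a multi-index i of the first N modes and j of the last M. *)
Definition tensor (C : Type) (I J : finType) := {ffun I * J -> C}.

Section Tensors.
Variable R : realType.
Notation C := (R[i]).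

Definition einstein (I K J : finType) (A : tensor C I K) (B : tensor C K J)
  : tensor C I J := [ffun p => \sum_(k : K) A (p.1, k) * B (k, p.2)].

Definition ctr (I J : finType) (A : tensor C I J) : tensor C J I :=
  [ffun p => (A (p.2, p.1))^*].

Definition is_MP (I J : finType) (A : tensor C I J) (X : tensor C J I) : Prop :=
  [/\ einstein (einstein A X) A = A,
      einstein (einstein X A) X = X,
      ctr (einstein A X) = einstein A X
    & ctr (einstein X A) = einstein X A].

(* The Moore-Penrose inverse: the (unique, existing) X satisfying the
   Penrose equations, selected by Hilbert's epsilon. *)
Definition mpinv (I J : finType) (A : tensor C I J) : tensor C J I :=
  epsilon (inhabits [ffun=> 0]) (is_MP A).
End Tensors.

Arguments einstein {R I K J}.
Arguments ctr {R I J}.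
Arguments mpinv {R I J}.

(* (i)-(iv) are the four Penrose equations for (A, Z), multiplied on the
   outside by R†, T† (for the first two) or by R^H, T^H (for the last two).
   Nothing is lost in doing so: R R† and T† T are hermitian idempotents with
   R R† A = A = A T† T and T† T Z = Z = Z R R†, so multiplying back by R, T
   (resp. by R†^H, T†^H) restores the original equation.  Since mpinv is
   defined by choice, one also needs that the Moore-Penrose inverse exists
   and is unique: a {1}-inverse comes from matrices via pinvmx, G A^H is a
   {1,3}-inverse of A for any {1}-inverse G of A^H A, and V A Y is the
   Moore-Penrose inverse when V is a {1,4}- and Y a {1,3}-inverse of A. *)

From mathcomp Require Import all_boot all_order all_algebra.
From mathcomp Require Import complex reals.
From Stdlib Require Import ClassicalEpsilon.
Set Implicit Arguments. Unset Strict Implicit. Unset Printing Implicit Defensive.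
Import GRing.Theory Num.Theory.
Local Open Scope ring_scope.

Local Notation "A *e B" := (einstein A B) (at level 40, left associativity).

Section EinsteinProduct.
Variable R : realType.
Local Notation C := R[i].
Implicit Types I J K L : finType.

Lemma einsteinA I K L J (A : tensor C I K) (B : tensor C K L)
    (D : tensor C L J) :
  A *e (B *e D) = A *e B *e D.
Proof.
apply/ffunP=> p; rewrite !ffunE /=.
under eq_bigr do rewrite ffunE /= big_distrr /=.
rewrite exchange_big /=; apply: eq_bigr => l _.
by rewrite ffunE /= big_distrl /=; apply: eq_bigr => k _; rewrite mulrA.
Qed.

Lemma einsteinBl I K J (A B : tensor C I K) (D : tensor C K J) :
  (A - B) *e D = A *e D - B *e D.
Proof.
apply/ffunP=> p; rewrite !ffunE -sumrB; apply: eq_bigr => k _.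
by rewrite !ffunE mulrBl.
Qed.

Lemma einsteinBr I K J (A : tensor C I K) (B D : tensor C K J) :
  A *e (B - D) = A *e B - A *e D.
Proof.
apply/ffunP=> p; rewrite !ffunE -sumrB; apply: eq_bigr => k _.
by rewrite !ffunE mulrBr.
Qed.

Lemma ctrK I J (A : tensor C I J) : ctr (ctr A) = A.
Proof. by apply/ffunP=> -[i j]; rewrite !ffunE conjCK. Qed.

Lemma ctrB I J (A B : tensor C I J) : ctr (A - B) = ctr A - ctr B.
Proof. by apply/ffunP=> -[i j]; rewrite !ffunE rmorphB. Qed.

Lemma ctr_einstein I K J (A : tensor C I K) (B : tensor C K J) :
  ctr (A *e B) = ctr B *e ctr A.
Proof.
apply/ffunP=> -[j i]; rewrite !ffunE /= rmorph_sum; apply: eq_bigr => k _.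
by rewrite !ffunE /= rmorphM mulrC.
Qed.

Lemma einstein_ctr_eq0 I J (X : tensor C I J) : X *e ctr X = 0 -> X = 0.
Proof.
move=> XX0; apply/ffunP=> -[i j]; rewrite ffunE.
have /eqP := congr1 (fun F : tensor C I I => F (i, i)) XX0.
rewrite /= !ffunE /= psumr_eq0 => [/allP/(_ j (mem_index_enum _))|k _].
  by rewrite ffunE /= mul_conjC_eq0 => /eqP.
by rewrite ffunE /= mul_conjC_ge0.
Qed.

(* The hypothesis makes (P A^H - A^H) (P A^H - A^H)^H vanish. *)
Lemma einstein_ctr_cancel I J (A : tensor C I J) (P : tensor C J J) :
  P *e ctr A *e A = ctr A *e A -> P *e ctr A = ctr A.
Proof.
move=> PAA; apply/eqP; rewrite -subr_eq0; apply/eqP; apply: einstein_ctr_eq0.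
by rewrite ctrB ctr_einstein ctrK einsteinBl !einsteinBr !einsteinA PAA subrr.
Qed.

Lemma hermitian_congr I J (W : tensor C I I) (U : tensor C I J) :
  ctr W = W -> ctr (ctr U *e W *e U) = ctr U *e W *e U.
Proof. by move=> hW; rewrite !ctr_einstein ctrK hW einsteinA. Qed.

Lemma einstein_sandwich_eq I J K L (U : tensor C K I) (U' : tensor C I K)
    (V : tensor C J L) (V' : tensor C L J) (X Y : tensor C I J) :
  U' *e U *e X = X -> U' *e U *e Y = Y ->
  X *e (V *e V') = X -> Y *e (V *e V') = Y ->
  U *e X *e V = U *e Y *e V <-> X = Y.
Proof.
move=> UX UY XV YV; split=> [UXV_UYV|-> //].
by rewrite -UX -XV -UY -YV !einsteinA -!(einsteinA U') UXV_UYV.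
Qed.

Lemma hermitian_sandwich_iff I K (U : tensor C I K) (U' : tensor C K I)
    (W : tensor C I I) :
  ctr (U *e U') = U *e U' -> U *e U' *e W = W -> W *e (U *e U') = W ->
  ctr W = W <-> ctr (ctr U *e W *e U) = ctr U *e W *e U.
Proof.
move=> hUU' UW WU; split; first exact: hermitian_congr.
move=> /(hermitian_congr U').
suff -> : ctr U' *e (ctr U *e W *e U) *e U' = W by [].
by rewrite !einsteinA -ctr_einstein hUU' UW -einsteinA WU.
Qed.

End EinsteinProduct.

Section MatrixTransport.
Variable R : realType.
Local Notation C := R[i].
Implicit Types I J K : finType.

Definition mx_of_tensor I J (A : tensor C I J) : 'M[C]_(#|I|, #|J|) :=
  \matrix_(i, j) A (enum_val i, enum_val j).

Definition tensor_of_mx I J (M : 'M[C]_(#|I|, #|J|)) : tensor C I J :=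
  [ffun p => M (enum_rank p.1) (enum_rank p.2)].

Lemma mx_of_tensorK I J : cancel (@mx_of_tensor I J) (@tensor_of_mx I J).
Proof. by move=> A; apply/ffunP=> -[i j]; rewrite !ffunE mxE /= !enum_rankK. Qed.

Lemma tensor_of_mxK I J : cancel (@tensor_of_mx I J) (@mx_of_tensor I J).
Proof. by move=> M; apply/matrixP=> i j; rewrite mxE ffunE /= !enum_valK. Qed.

Lemma mx_of_einstein I K J (A : tensor C I K) (B : tensor C K J) :
  mx_of_tensor (A *e B) = mx_of_tensor A *m mx_of_tensor B.
Proof.
apply/matrixP=> i j; rewrite !mxE ffunE /=.
under [RHS]eq_bigr do rewrite !mxE.
by rewrite -(big_enum_val (A := K)
               (fun k => A (enum_val i, k) * B (k, enum_val j))).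
Qed.

Lemma ginv_exists I J (A : tensor C I J) :
  exists G : tensor C J I, A *e G *e A = A.
Proof.
exists (tensor_of_mx (pinvmx (mx_of_tensor A))).
apply: (can_inj (@mx_of_tensorK I J)).
by rewrite !mx_of_einstein tensor_of_mxK mulmxKpV.
Qed.

End MatrixTransport.

Section MoorePenrose.
Variable R : realType.
Local Notation C := R[i].
Implicit Types I J : finType.

Lemma ginv_ctr_mul_cancel I J (A : tensor C I J) (G : tensor C J J) :
  ctr A *e A *e G *e (ctr A *e A) = ctr A *e A ->
  ctr A *e A *e G *e ctr A = ctr A.
Proof. by move=> hG; apply: einstein_ctr_cancel; rewrite -einsteinA. Qed.

Lemma inv13_exists I J (A : tensor C I J) :
  exists Y : tensor C J I, A *e Y *e A = A /\ ctr (A *e Y) = A *e Y.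
Proof.
have [G hG] := ginv_exists (ctr A *e A).
have hGH : ctr A *e A *e ctr G *e (ctr A *e A) = ctr A *e A.
  by have := congr1 ctr hG; rewrite !ctr_einstein ctrK -!einsteinA.
have AGA : A *e G *e ctr A *e A = A.
  have := congr1 ctr (ginv_ctr_mul_cancel hGH).
  by rewrite !ctr_einstein !ctrK !einsteinA.
exists (G *e ctr A); rewrite !einsteinA AGA; split=> //.
have <- : A *e G *e (ctr A *e A *e ctr G *e ctr A) = A *e G *e ctr A.
  by rewrite ginv_ctr_mul_cancel.
by rewrite !ctr_einstein !ctrK !einsteinA AGA.
Qed.

Lemma inv14_exists I J (A : tensor C I J) :
  exists V : tensor C J I, A *e V *e A = A /\ ctr (V *e A) = V *e A.
Proof.
have [W [AWA hAW]] := inv13_exists (ctr A).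
exists (ctr W); split.
  by have := congr1 ctr AWA; rewrite !ctr_einstein !ctrK einsteinA.
by rewrite ctr_einstein ctrK -{1}hAW ctr_einstein ctrK.
Qed.

Lemma is_MP_exists I J (A : tensor C I J) : exists X, is_MP A X.
Proof.
have [Y [AYA hAY]] := inv13_exists A.
have [V [AVA hVA]] := inv14_exists A.
have AVAY : A *e (V *e A *e Y) = A *e Y by rewrite !einsteinA AVA.
have VAYA : V *e A *e Y *e A = V *e A.
  by rewrite -!einsteinA [A *e (Y *e A)]einsteinA AYA.
exists (V *e A *e Y); split.
- by rewrite AVAY AYA.
- by rewrite VAYA -einsteinA AVAY -einsteinA.
- by rewrite AVAY.
- by rewrite VAYA.
Qed.

Lemma mpinvP I J (A : tensor C I J) : is_MP A (mpinv A).
Proof. exact: epsilon_spec (is_MP_exists A). Qed.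

(* X = X (A X)^H = X X^H A^H Y^H A^H = X (A X)^H (A Y)^H = X A X A Y. *)
Lemma inv23_inv13_eq I J (A : tensor C I J) (X Y : tensor C J I) :
  X *e A *e X = X -> ctr (A *e X) = A *e X ->
  A *e Y *e A = A -> ctr (A *e Y) = A *e Y ->
  X = X *e A *e Y.
Proof.
move=> XAX hAX AYA hAY.
transitivity (X *e ctr (A *e Y *e A *e X)); first by rewrite AYA hAX einsteinA XAX.
transitivity (X *e (ctr (A *e X) *e ctr (A *e Y))).
  by rewrite !ctr_einstein !einsteinA.
by rewrite hAX hAY !einsteinA XAX.
Qed.

Lemma is_MP_ctr I J (A : tensor C I J) (X : tensor C J I) :
  is_MP A X -> is_MP (ctr A) (ctr X).
Proof.
move=> [AXA XAX hAX hXA]; split.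
- by rewrite -!ctr_einstein einsteinA AXA.
- by rewrite -!ctr_einstein einsteinA XAX.
- by rewrite -ctr_einstein hXA.
- by rewrite -ctr_einstein hAX.
Qed.

Lemma is_MP_uniq I J (A : tensor C I J) (X Y : tensor C J I) :
  is_MP A X -> is_MP A Y -> X = Y.
Proof.
move=> hX hY; have [_ XAX hAX _] := hX; have [AYA _ hAY _] := hY.
have [_ YAYH hAYH _] := is_MP_ctr hY; have [AXAH _ hAXH _] := is_MP_ctr hX.
have := inv23_inv13_eq YAYH hAYH AXAH hAXH.
rewrite -!ctr_einstein einsteinA => /(congr1 ctr); rewrite !ctrK => ->.
exact: inv23_inv13_eq.
Qed.

Lemma mpinv_eqP I J (A : tensor C I J) (X : tensor C J I) :
  mpinv A = X <-> is_MP A X.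
Proof. by split=> [<-|/(is_MP_uniq (mpinvP A))]; first exact: mpinvP. Qed.

End MoorePenrose.

Section ReverseOrderLaw.
Variables (R : realType) (I K L J : finType).
Local Notation C := R[i].
Variables (RR : tensor C I K) (Rp : tensor C K I).
Variables (T : tensor C L J) (Tp : tensor C J L).
Variables (A : tensor C I J) (Z : tensor C J I).
Hypotheses (hR : ctr (RR *e Rp) = RR *e Rp) (hT : ctr (Tp *e T) = Tp *e T).
Hypotheses (RA : RR *e Rp *e A = A) (AT : A *e (Tp *e T) = A).
Hypotheses (TZ : Tp *e T *e Z = Z) (ZR : Z *e (RR *e Rp) = Z).

Lemma is_MP_reverse_orderP :
  is_MP A Z <->
  [/\ Rp *e A *e Z *e A *e Tp = Rp *e A *e Tp,
      T *e Z *e A *e Z *e RR = T *e Z *e RR,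
      ctr (ctr RR *e A *e Z *e RR) = ctr RR *e A *e Z *e RR
    & ctr (T *e Z *e A *e ctr T) = T *e Z *e A *e ctr T].
Proof.
have E1 : Rp *e (A *e Z *e A) *e Tp = Rp *e A *e Tp <-> A *e Z *e A = A.
  apply: (einstein_sandwich_eq (U' := RR) (V' := T)) => //.
  - by rewrite !einsteinA RA.
  - by rewrite -einsteinA AT.
have E2 : T *e (Z *e A *e Z) *e RR = T *e Z *e RR <-> Z *e A *e Z = Z.
  apply: (einstein_sandwich_eq (U' := Tp) (V' := Rp)) => //.
  - by rewrite !einsteinA TZ.
  - by rewrite -einsteinA ZR.
have E3 : ctr (A *e Z) = A *e Z <->
          ctr (ctr RR *e (A *e Z) *e RR) = ctr RR *e (A *e Z) *e RR.
  apply: (hermitian_sandwich_iff (U' := Rp)) => //.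
  - by rewrite einsteinA RA.
  - by rewrite -einsteinA ZR.
have TTp : ctr T *e ctr Tp = Tp *e T by rewrite -ctr_einstein hT.
have E4 : ctr (Z *e A) = Z *e A <->
          ctr (ctr (ctr T) *e (Z *e A) *e ctr T)
            = ctr (ctr T) *e (Z *e A) *e ctr T.
  apply: (hermitian_sandwich_iff (U' := ctr Tp)); rewrite TTp //.
  - by rewrite einsteinA TZ.
  - by rewrite -einsteinA AT.
rewrite !einsteinA in E1 E2 E3; rewrite ctrK !einsteinA in E4.
by split=> -[/E1 ? /E2 ? /E3 ? /E4 ?].
Qed.

End ReverseOrderLaw.

Theorem theorem4p1 (R : realType)
  (N M K L : nat)
  (dI : 'I_N -> nat) (dJ : 'I_M -> nat) (dH : 'I_K -> nat) (dG : 'I_L -> nat)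
  (RR : tensor R[i] (idx dI) (idx dH))
  (S : tensor R[i] (idx dH) (idx dG))
  (T : tensor R[i] (idx dG) (idx dJ)) :
  let A := einstein (einstein RR S) T in
  let Z := einstein (einstein (mpinv T) (mpinv S)) (mpinv RR) in
  mpinv A = Z <->
  [/\ einstein (einstein (einstein (einstein (mpinv RR) A) Z) A) (mpinv T)
        = einstein (einstein (mpinv RR) A) (mpinv T),
      einstein (einstein (einstein (einstein T Z) A) Z) RR
        = einstein (einstein T Z) RR,
      ctr (einstein (einstein (einstein (ctr RR) A) Z) RR)
        = einstein (einstein (einstein (ctr RR) A) Z) RR
    & ctr (einstein (einstein (einstein T Z) A) (ctr T))
        = einstein (einstein (einstein T Z) A) (ctr T)].
Proof.
move=> A Z.
have [RRpRR RpRRRp hR _] := mpinvP RR.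
have [TTpT TpTTp _ hT] := mpinvP T.
apply: iff_trans (mpinv_eqP _ _) (is_MP_reverse_orderP hR hT _ _ _ _).
- by rewrite /A !einsteinA RRpRR.
- by rewrite /A -!einsteinA [T *e _]einsteinA TTpT.
- by rewrite /Z !einsteinA TpTTp.
- by rewrite /Z -!einsteinA [mpinv RR *e _]einsteinA RpRRRp.
Qed.
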